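(* Let $r,s$ be integers with $s\ge 3$ and $s-r+1=0$, and let $G=(K_r\cup\overline{K_s})\vee\{v\}$, i.e. the graph obtained from the disjoint union of a complete graph on $r$ vertices and an edgeless graph on $s$ vertices by adding one new vertex $v$ adjacent to all $r+s$ of these vertices. Then $\mathrm{mur}(G)=3$.
   Context: For a finite simple undirected graph $G$ on vertices $v_1,\dots,v_n$, let $A_G$ be its $(0,1)$-adjacency matrix, $D_G=\mathrm{diag}(d_1,\dots,d_n)$ with $d_i$ the degree of $v_i$, $I$ the $n\times n$ identity matrix and $J$ the $n\times n$ all-ones matrix. A universal adjacency matrix of $G$ is any matrix $\alpha A_G+\beta I+\gamma J+\delta D_G$ with real scalars $\alpha,\beta,\gamma,\delta$ and $\alpha\neq 0$. The minimum universal rank $\mathrm{mur}(G)$ is the minimum rank over all universal adjacency matrices of $G$. *)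

From HB Require Import structures.
From mathcomp Require Import all_boot all_order all_algebra.
From mathcomp Require Import boolp reals.
Set Implicit Arguments. Unset Strict Implicit. Unset Printing Implicit Defensive.
Import Order.TTheory GRing.Theory Num.Theory.
Local Open Scope ring_scope.

Definition simple_graph (n : nat) (e : rel 'I_n) : Prop :=
  irreflexive e /\ symmetric e.

Section UA.
Variables (R : realType) (n : nat) (e : rel 'I_n).

Definition adjmx : 'M[R]_n := \matrix_(i, j) (e i j)%:R.
Definition deg (i : 'I_n) : nat := #|[set j | e i j]|.
Definition degmx : 'M[R]_n := diag_mx (\row_i (deg i)%:R).
Definition onesmx : 'M[R]_n := const_mx 1.

Definition univ_adj (a b c d : R) : 'M[R]_n :=
  a *: adjmx + b%:M + c *: onesmx + d *: degmx.

Definition univ_rank_attained (k : nat) : bool :=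
  `[< exists a b c d : R, a != 0 /\ \rank (univ_adj a b c d) = k >].

Lemma univ_rank_attained_ex : exists k, univ_rank_attained k.
Proof.
exists (\rank (univ_adj 1 0 0 0)); apply/asboolP.
by exists 1, 0, 0, 0; split => //; exact: oner_neq0.
Qed.

Definition mur : nat := ex_minn univ_rank_attained_ex.
End UA.

(* The graph (K_r ∪ co-K_s) ∨ {v} on vertices 'I_(r+s+1):
   0..r-1 form the clique K_r, r..r+s-1 the independent set, r+s is v. *)
Definition cone_clique_indep (r s : nat) : rel 'I_(r + s + 1) :=
  fun i j => (i != j) &&
    [|| ((i < r)%N && (j < r)%N), (val i == r + s)%N | (val j == r + s)%N].
Arguments cone_clique_indep : clear implicits.
Arguments mur : clear implicits.

From HB Require Import structures.
From mathcomp Require Import all_boot all_order all_algebra.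
From mathcomp Require Import boolp reals.
From mathcomp Require Import ring zify.
Set Implicit Arguments. Unset Strict Implicit. Unset Printing Implicit Defensive.
Import Order.TTheory GRing.Theory Num.Theory.

(* Every entry of a universal adjacency matrix M of G depends only on whether
   the two vertices coincide and on which of the three classes (clique,
   independent set, apex) they lie in.  Hence the difference of the rows of two
   independent vertices is (beta + delta) (e_x - e_y), and that of two clique
   vertices is (beta + delta r - alpha) (e_x - e_y); together with the apex row
   they give a nonsingular 3x3 minor of row differences unless beta = -delta
   and alpha = delta s, and in that last case a genuine 3x3 minor of M equals
   -alpha^3.  So rank M >= 3.  Conversely, for (alpha, beta, gamma, delta) =
   (s, -1, 0, 1) and r = s + 1 the diagonal entries agree with the off-diagonal
   ones inside each class, so M is a blow-up of a 3x3 matrix and rank M <= 3. *)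

Local Open Scope ring_scope.

Lemma mur_eq (R : realType) n (e : rel 'I_n) k :
  (forall a b c d : R, a != 0 -> (k <= \rank (univ_adj e a b c d))%N) ->
  (exists a b c d : R, a != 0 /\ \rank (univ_adj e a b c d) = k) ->
  mur R n e = k.
Proof.
move=> rank_ge [a [b [c [d [a_neq0 rank_k]]]]].
rewrite /mur; case: ex_minnP => m /asboolP [a' [b' [c' [d' [a'_neq0 <-]]]]].
move=> min_m; apply/eqP; rewrite eqn_leq rank_ge // andbT.
by apply: min_m; apply/asboolP; exists a, b, c, d.
Qed.

Lemma det_mx33 (R : comNzRingType) (A : 'M[R]_3) : \det A =
  A 0 0 * (A 1 1 * A 2 2 - A 1 2 * A 2 1)
  - A 0 1 * (A 1 0 * A 2 2 - A 1 2 * A 2 0)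
  + A 0 2 * (A 1 0 * A 2 1 - A 1 1 * A 2 0).
Proof.
(* Reading the entries through the values of their indices identifies the
   different spellings of the same ordinal produced by the Laplace expansion. *)
pose a i j := A (inord i) (inord j).
have Aa (i j : 'I_3) : A i j = a i j by rewrite /a !inord_val.
rewrite (expand_det_row _ 0) !big_ord_recr big_ord0 /= add0r /cofactor.
rewrite !(expand_det_row _ 0) !big_ord_recr big_ord0 /= !add0r /cofactor.
rewrite ?big_ord0 ?add0r !det_mx11 !mxE !Aa /bump /=.
rewrite ?add0n ?expr0 ?expr1 ?exprS.
ring.
Qed.

Section SubmatrixRank.
Variable F : fieldType.

Lemma mxrank_mxsub_le m n m' n' (f : 'I_m' -> 'I_m) (g : 'I_n' -> 'I_n)
    (A : 'M[F]_(m, n)) : (\rank (mxsub f g A) <= \rank A)%N.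
Proof.
have -> : mxsub f g A = rowsub f 1%:M *m A *m colsub g 1%:M.
  rewrite mulmx_colsub mulmx1 mul_rowsub_mx mul1mx.
  by apply/matrixP => i j; rewrite !mxE.
exact: leq_trans (mxrankM_maxl _ _) (mxrankM_maxr _ _).
Qed.

Lemma mxrank_ge_minor m n k (f : 'I_k -> 'I_m) (g : 'I_k -> 'I_n)
    (A : 'M[F]_(m, n)) : \det (mxsub f g A) != 0 -> (k <= \rank A)%N.
Proof.
move=> det_neq0; rewrite -[k](@mxrank_unit _ _ (mxsub f g A)).
  exact: mxrank_mxsub_le.
by rewrite unitmxE unitfE.
Qed.

Lemma mxrank_rowsubB_le m n m' (f g : 'I_m' -> 'I_m) (A : 'M[F]_(m, n)) :
  (\rank (rowsub f A - rowsub g A)%R <= \rank A)%N.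
Proof. by rewrite rowsubE [rowsub g A]rowsubE -mulmxBl mxrankM_maxr. Qed.

Lemma mxrank_ge_rowsubB_minor m n k (f g : 'I_k -> 'I_m) (h : 'I_k -> 'I_n)
    (A : 'M[F]_(m, n)) :
  \det (colsub h (rowsub f A - rowsub g A)) != 0 -> (k <= \rank A)%N.
Proof.
by move=> /mxrank_ge_minor /leq_trans; apply; apply: mxrank_rowsubB_le.
Qed.

End SubmatrixRank.

Local Close Scope ring_scope.

Section ConeCombinatorics.
Local Open Scope nat_scope.
Variables r s : nat.
Implicit Types i j : 'I_(r + s + 1).

Definition cone_part (k : nat) : nat :=
  if k < r then 0 else if k < r + s then 1 else 2.

Definition part_adj (x y : nat) : bool :=
  [|| (x == 0) && (y == 0), x == 2 | y == 2].

Definition part_deg (x : nat) : nat :=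
  if x == 0 then r else if x == 1 then 1 else r + s.

Lemma cone_part_lt3 k : cone_part k < 3.
Proof. by rewrite /cone_part; case: ifP => //; case: ifP. Qed.

Lemma cone_part_eq0 k : (cone_part k == 0) = (k < r).
Proof. by rewrite /cone_part; case: ifP => //; case: ifP. Qed.

Lemma cone_part_eq2 i : (cone_part i == 2) = (i == r + s :> nat).
Proof.
have := ltn_ord i; rewrite /cone_part.
by case: ifP => ?; [|case: ifP => ?]; lia.
Qed.

Lemma cone_clique_indepE i j :
  cone_clique_indep r s i j = (i != j) && part_adj (cone_part i) (cone_part j).
Proof.
by rewrite /cone_clique_indep /part_adj !cone_part_eq0 !cone_part_eq2.
Qed.

Definition cone_vtx (k : nat) : 'I_(r + s + 1) :=
  cast_ord (esym (addn1 _)) (inord k).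

Definition cone_apex : 'I_(r + s + 1) := cone_vtx (r + s).

Lemma val_cone_vtx k : k <= r + s -> val (cone_vtx k) = k.
Proof. by move=> k_le; rewrite /cone_vtx /= inordK. Qed.

Lemma val_cone_apex : val cone_apex = r + s.
Proof. exact: val_cone_vtx. Qed.

Definition cone_clique := [set j : 'I_(r + s + 1) | j < r].

Lemma card_cone_clique : #|cone_clique| = r.
Proof.
have r_le : r <= r + s + 1 by lia.
have widen_inj : injective (widen_ord r_le) by move=> k l [] /val_inj.
rewrite -[r in RHS]card_ord -(card_imset _ widen_inj).
apply: eq_card => j; rewrite inE; apply/idP/imsetP => [j_lt | [k _ ->]].
  by exists (Ordinal j_lt) => //; apply/val_inj.
by rewrite /= ltn_ord.
Qed.

Lemma deg_cone i : deg (cone_clique_indep r s) i = part_deg (cone_part i).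
Proof.
rewrite /deg /part_deg.
have [i_lt | i_ge] := ltnP i r.
- have -> : [set j | cone_clique_indep r s i j]
            = (cone_apex |: cone_clique) :\ i.
    apply/setP => j; rewrite !inE cone_clique_indepE /part_adj.
    rewrite -!val_eqE ?val_cone_apex /=.
    by rewrite !cone_part_eq0 !cone_part_eq2; lia.
  rewrite cone_part_eq0 i_lt.
  move: (cardsD1 i (cone_apex |: cone_clique)).
  rewrite cardsU1 card_cone_clique !inE val_cone_apex i_lt orbT.
  by rewrite ltnNge leq_addr /=; lia.
have [i_lt | i_apex] := ltnP i (r + s).
- have -> : [set j | cone_clique_indep r s i j] = [set cone_apex].
    apply/setP => j; rewrite !inE cone_clique_indepE /part_adj.
    rewrite -!val_eqE ?val_cone_apex /=.
    by rewrite !cone_part_eq0 !cone_part_eq2; lia.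
  by rewrite cards1 /cone_part ltnNge i_ge i_lt.
have -> : [set j | cone_clique_indep r s i j] = [set~ i].
  apply/setP => j; rewrite !inE cone_clique_indepE /part_adj.
  rewrite -!val_eqE ?val_cone_apex /= !cone_part_eq0 !cone_part_eq2.
  by have := ltn_ord i; have := ltn_ord j; lia.
by rewrite cardsC1 card_ord /cone_part ltnNge i_ge ltnNge i_apex /=; lia.
Qed.

End ConeCombinatorics.

Local Open Scope ring_scope.

Lemma univ_adj_coneE (R : realType) r s (a b c d : R) (i j : 'I_(r + s + 1)) :
  univ_adj (cone_clique_indep r s) a b c d i j =
  if i == j then b + c + d * (part_deg r s (cone_part r s i))%:R
  else a * (part_adj (cone_part r s i) (cone_part r s j))%:R + c.
Proof.
rewrite /univ_adj /adjmx /degmx /onesmx !mxE cone_clique_indepE deg_cone.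
case: (eqVneq i j) => [<- | i_neq_j] /=.
  by rewrite mulr0 add0r !mulr1n mulr1 addrAC.
by rewrite !mulr0n mulr0 mulr1 !addr0.
Qed.

Section ConeUpperBound.
Variables (R : realType) (s : nat).

Definition cone_class (i : 'I_(s.+1 + s + 1)) : 'I_3 :=
  inord (cone_part s.+1 s i).

Definition cone_quotient : 'M[R]_3 := \matrix_(x, y)
  if (x == 2 :> nat) && (y == 2 :> nat) then 2 * s%:R
  else s%:R * (part_adj x y)%:R.

Lemma cone_mxsub_quotient :
  univ_adj (cone_clique_indep s.+1 s) s%:R (-1) 0 1
  = mxsub cone_class cone_class cone_quotient.
Proof.
apply/matrixP => i j; rewrite univ_adj_coneE !mxE !inordK ?cone_part_lt3 //.
case: (eqVneq i j) => [<- | i_neq_j].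
  rewrite /part_deg /part_adj.
  case: (cone_part _ _ i) (cone_part_lt3 s.+1 s i) => [|[|[|k]]] //= _.
  - by rewrite -natr1; ring.
  - by ring.
  - by rewrite natrD -!natr1; ring.
rewrite !cone_part_eq2; case: ifP => [/andP [/eqP vi /eqP vj] | _].
  by move: i_neq_j; rewrite -val_eqE /= vi vj eqxx.
by rewrite addr0.
Qed.

Lemma cone_rank_le3 :
  (\rank (univ_adj (cone_clique_indep s.+1 s) (s%:R : R) (-1) 0 1) <= 3)%N.
Proof.
rewrite cone_mxsub_quotient.
exact: leq_trans (mxrank_mxsub_le _ _ _) (rank_leq_col _).
Qed.

End ConeUpperBound.

Section ConeLowerBound.
Variables (R : realType) (s : nat) (a b c d : R).
Hypothesis s_ge3 : (3 <= s)%N.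
Variable M : 'M[R]_(s.+1 + s + 1).
Hypothesis M_entry : forall i j, M i j =
  if i == j then b + c + d * (part_deg s.+1 s (cone_part s.+1 s i))%:R
  else a * (part_adj (cone_part s.+1 s i) (cone_part s.+1 s j))%:R + c.

Local Notation vtx3 x y z :=
  (tnth [tuple cone_vtx s.+1 s x; cone_vtx s.+1 s y; cone_vtx s.+1 s z]).
Local Notation apex := (s.+1 + s)%N.

(* Each entry of the minors below is an [if] on a linear condition in [s]. *)
Ltac expand_minor :=
  rewrite det_mx33 !mxE /= !M_entry -!val_eqE ?val_cone_vtx; try lia;
  rewrite /cone_part; repeat (case: ifP => ?; try (exfalso; lia));
  rewrite /part_deg /part_adj /=.

Definition indep_minor :=
  colsub (vtx3 s.+1 s.+3 0%N)
    (rowsub (vtx3 s.+1 s.+2 apex) M - rowsub (vtx3 s.+2 s.+3 s.+1) M).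

Definition clique_minor :=
  colsub (vtx3 0%N 2%N s.+2)
    (rowsub (vtx3 0%N 1%N apex) M - rowsub (vtx3 1%N 2%N s.+1) M).

Definition apex_minor := mxsub (vtx3 0%N s.+1 apex) (vtx3 0%N s.+1 apex) M.

Lemma det_indep_minor : \det indep_minor = - ((b + d) ^+ 2 * a).
Proof. by rewrite /indep_minor; expand_minor; ring. Qed.

Lemma det_clique_minor :
  \det clique_minor = - ((b + d * s.+1%:R - a) ^+ 2 * a).
Proof. by rewrite /clique_minor; expand_minor; ring. Qed.

Lemma det_apex_minor : b = - d -> a = d * s%:R -> \det apex_minor = - a ^+ 3.
Proof.
move=> b_opp a_ds; rewrite /apex_minor; expand_minor.
by rewrite b_opp a_ds natrD -!natr1; ring.
Qed.

Lemma cone_rank_ge3 : a != 0 -> (3 <= \rank M)%N.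
Proof.
move=> a_neq0.
have [bd0 | bd_neq0] := eqVneq (b + d) 0; last first.
  have : \det indep_minor != 0.
    by rewrite det_indep_minor oppr_eq0 mulf_neq0 // expf_neq0.
  exact: mxrank_ge_rowsubB_minor.
have [bda0 | bda_neq0] := eqVneq (b + d * s.+1%:R - a) 0; last first.
  have : \det clique_minor != 0.
    by rewrite det_clique_minor oppr_eq0 mulf_neq0 // expf_neq0.
  exact: mxrank_ge_rowsubB_minor.
have b_opp : b = - d by apply/eqP; rewrite -addr_eq0 bd0.
have a_ds : a = d * s%:R.
  by move/eqP: bda0; rewrite subr_eq0 b_opp -natr1 => /eqP <-; ring.
have : \det apex_minor != 0 by rewrite det_apex_minor // oppr_eq0 expf_neq0.
exact: mxrank_ge_minor.
Qed.

End ConeLowerBound.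

Theorem theorem22 (R : realType) (r s : nat) :
  (3 <= s)%N -> (s%:Z - r%:Z + 1 = 0)%R ->
  mur R (r + s + 1) (cone_clique_indep r s) = 3%N.
Proof.
move=> s_ge3 rs; have -> : r = s.+1 by lia.
have s_neq0 : (s%:R : R) != 0 by rewrite pnatr_eq0 -lt0n; lia.
apply: mur_eq => [a b c d a_neq0 | ].
  exact: (cone_rank_ge3 s_ge3 (univ_adj_coneE _ _ _ _) a_neq0).
exists s%:R, (-1), 0, 1; split => //.
apply/eqP; rewrite eqn_leq cone_rank_le3.
exact: (cone_rank_ge3 s_ge3 (univ_adj_coneE _ _ _ _) s_neq0).
Qed.
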